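(* Let $\mathcal{V}$ be a commutative associative $\mathbb{C}$-algebra which is a domain, equipped with two commuting $\mathbb{C}$-linear derivations $\partial_1,\partial_2$, and let $a\in\mathcal{V}$ and $\mathcal{H}_a=\partial_1\partial_2+a$. For every $\mathcal{P}\in\mathcal{V}[\partial_2]((\partial_1^{-1}))$ there exists a unique $\mathcal{Q}\in\mathcal{V}[\partial_2]((\partial_1^{-1}))$ such that $\mathcal{P}-\mathcal{Q}\mathcal{H}_a\in\mathcal{V}((\partial_1^{-1}))$. The same holds with the roles of $\partial_1$ and $\partial_2$ exchanged.
   Context: $\mathcal{V}[\partial_2]((\partial_1^{-1}))$ denotes the algebra of formal pseudodifferential operators $\sum_{n\le N} p_n\partial_1^n$ with coefficients $p_n\in\mathcal{V}[\partial_2]$ (polynomials in $\partial_2$ with coefficients in $\mathcal{V}$), with multiplication determined by $\partial_i v=v\partial_i+\partial_i(v)$, $\partial_1\partial_2=\partial_2\partial_1$, and $\partial_1^{-1}v=v\partial_1^{-1}-\partial_1(v)\partial_1^{-2}+\partial_1^2(v)\partial_1^{-3}-\cdots$ for $v\in\mathcal{V}$. $\mathcal{V}((\partial_1^{-1}))$ is the subalgebra of such operators not involving $\partial_2$. *)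

From mathcomp Require Import all_boot all_algebra.
From mathcomp Require Import reals complex.
From mathcomp Require Import boolp classical_sets fsbigop.

Set Implicit Arguments.
Unset Strict Implicit.
Unset Printing Implicit Defensive.
Import GRing.Theory Num.Theory.
Local Open Scope ring_scope.

(* Generalized binomial coefficient binom(n, k) for n : int, k : nat,
   i.e. n(n-1)...(n-k+1)/k!.  For n = Negz p = -(p+1) this equals
   (-1)^k * binom(p+k, k). *)
Definition binz (n : int) (k : nat) : int :=
  match n with
  | Posz p => ('C(p, k))%:Z
  | Negz p => (-1) ^+ k * ('C(p + k, k))%:Z
  end.

Section PDO.
Variable (R : realType) (V : comAlgType R[i]).

(* An element of V[d2]((d1^-1)) is represented by its coefficient function:
   c n m is the coefficient of  d2^m d1^n  (normal form  sum c n m d2^m d1^n,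
   coefficients on the left; d1 and d2 commute). *)
Definition pdo := int -> nat -> V.

(* c really is an element of V[d2]((d1^-1)):
   bounded above in d1, and each coefficient of d1^n is a polynomial in d2. *)
Definition is_pdo (c : pdo) : Prop :=
  (exists N : int, forall n m, N < n -> c n m = 0) /\
  (forall n : int, exists M : nat, forall m, (M < m)%N -> c n m = 0).

Definition in_Vd1 (c : pdo) : Prop := forall n m, (0 < m)%N -> c n m = 0.

Definition pdo_sub (P Q : pdo) : pdo := fun n m => P n m - Q n m.

Variables (d1 d2 : V -> V).

(* Product determined by  d_i v = v d_i + d_i(v), d1 d2 = d2 d1 and the
   given expansion of d1^-1 v; in closed form
     d2^m d1^n q = sum_{j,k} C(m,j) C(n,k) d1^k d2^j (q) d2^(m-j) d1^(n-k).
   Coefficient of d2^M d1^N in P*Q, summing over (n,k,m,j) with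
   n' = N - n + k, m' = M - (m - j) (finitely many nonzero terms). *)
Definition pdo_mul (P Q : pdo) : pdo := fun N M =>
  \sum_(i \in [set: int * nat * nat * nat])
    (let: (n, k, m, j) := i in
     if (j <= m)%N && (m - j <= M)%N then
       P n m * ((binz n k * ('C(m, j))%:Z)%:~R)
         * iter k d1 (iter j d2 (Q (N - n + k%:Z) (M - (m - j))%N))
     else 0).

Definition Hop (a : V) : pdo := fun n m =>
  if (n == 1) && (m == 1)%N then 1
  else if (n == 0) && (m == 0)%N then a else 0.

Definition unique_division (a : V) : Prop :=
  forall P : pdo, is_pdo P ->
    exists Q : pdo, [/\ is_pdo Q, in_Vd1 (pdo_sub P (pdo_mul Q (Hop a))) &
      forall Q' : pdo, is_pdo Q' ->
        in_Vd1 (pdo_sub P (pdo_mul Q' (Hop a))) -> Q' = Q].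

End PDO.

Definition is_derivation (R : realType) (V : comAlgType R[i])
  (d : {linear V -> V}) : Prop :=
  forall x y : V, d (x * y) = d x * y + x * d y.

From mathcomp Require Import all_boot all_algebra.
From mathcomp Require Import reals complex.
From mathcomp Require Import boolp classical_sets cardinality fsbigop.
From mathcomp Require Import zify.
Set Implicit Arguments.
Unset Strict Implicit.
Unset Printing Implicit Defensive.
Import GRing.Theory Num.Theory.
Local Open Scope ring_scope.
Local Open Scope classical_set_scope.

(* Since d1^k d2^j (1) vanishes unless
   k = j = 0, the coefficient of d2^M d1^N in Q H_a is
     Q (N-1) (M-1)  (for M > 0)  +  (Q a)_{N,M},
   where (Q a)_{N,M} = sum_{k,j} C(N+k,k) C(M+j,j) Q (N+k) (M+j) d1^k d2^j (a)
   only involves rows N+k >= N of Q (lemma [coef_mul_Ha]).  Hence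
   P - Q H_a has no positive power of d2 exactly when every row n of Q is
   determined by P and the rows of Q strictly above n
   ([in_Vd1_divisionP], [division_recursion]).  Since Q is bounded above in
   d1, such a downward recursion has exactly one solution
   ([downward_fixpoint_unique], [downward_fixpoint_exists]), and its rows are
   again polynomial in d2 ([division_recursion_rows]).  The argument only uses
   that d1 and d2 are linear and kill 1, so it applies verbatim with d1 and d2
   exchanged. *)


(* Finitely many rows, each eventually zero, are eventually zero uniformly;
   this turns "each row is a polynomial in d2" into a common degree bound. *)
Lemma uniform_row_bound (p : nat -> nat -> Prop) (K : nat) :
  (forall k, (k < K)%N -> exists M : nat, forall m, (M < m)%N -> p k m) ->
  exists M : nat, forall k, (k < K)%N -> forall m, (M < m)%N -> p k m.
Proof.
elim: K => [|K IH] rows; first by exists 0%N.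
have [J rowsJ] := IH (fun k hk => rows k (ltnW hk)).
have [MK rowK] := rows K (ltnSn K).
exists (maxn J MK) => k hk m hm.
have [ltkK|geKk] := ltnP k K.
  exact: rowsJ ltkK _ (leq_ltn_trans (leq_maxl _ _) hm).
have -> : k = K by lia.
exact: rowK _ (leq_ltn_trans (leq_maxr _ _) hm).
Qed.

Section DownwardRecursion.
Variables (X : Type) (x0 : X) (T : (int -> X) -> int -> X).
Hypothesis T_local :
  forall f g n, (forall n', n < n' -> f n' = g n') -> T f n = T g n.

(* Two solutions that are eventually x0 agree: downward induction from above
   the larger of their bounds. *)
Lemma downward_fixpoint_unique (f g : int -> X) (B : int) :
  (forall n, B < n -> f n = x0) -> (forall n, B < n -> g n = x0) ->
  (forall n, f n = T f n) -> (forall n, g n = T g n) -> f = g.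
Proof.
move=> f0 g0 fT gT.
have agree t : forall n, B - t%:Z < n -> f n = g n.
  elim: t => [|t IH] n hn; first by rewrite f0 ?g0 //; lia.
  by rewrite fT gT; apply: T_local => n' hn'; apply: IH; lia.
by apply/funext => n; apply: (agree `|B - n|%N.+1); lia.
Qed.

(* A solution exists: the t-th iterate of the (truncated) recursion from the
   constant x0 is correct on all n > B - t, so the diagonal is a fixpoint. *)
Lemma downward_fixpoint_exists (B : int) :
  exists f : int -> X, forall n, f n = if n < B then T f n else x0.
Proof.
pose T' f n := if n < B then T f n else x0.
pose approx t := iter t T' (fun=> x0).
have approx_hi t n : B <= n -> approx t n = x0.
  by case: t => [|t] hn //=; rewrite /T' ifF //; apply/negbTE; lia.
have approx_stable t s n : B - t%:Z < n -> approx (t + s)%N n = approx t n.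
  elim: t s n => [|t IH] s n hn; first by rewrite !approx_hi //; lia.
  rewrite addSn /= /T'; case: ifP => // _.
  by apply: T_local => n' hn'; apply: IH; lia.
have approx_agree t s n :
    B - t%:Z < n -> B - s%:Z < n -> approx t n = approx s n.
  move=> ht hs; have [le_ts|/ltnW le_st] := leqP t s.
    by rewrite -(subnKC le_ts) approx_stable.
  by rewrite -(subnKC le_st) approx_stable.
exists (fun n => approx `|B - n|%N.+1 n) => n.
rewrite [LHS]/= {1}/T'; case: ifP => // ltnB.
by apply: T_local => n' hn'; apply: approx_agree; lia.
Qed.

End DownwardRecursion.

Lemma iter_linear0 (R : nzRingType) (U : lmodType R) (d : {linear U -> U}) k :
  iter k d 0 = 0.
Proof. by elim: k => //= k ->; rewrite linear0. Qed.

(* A derivation kills 1: d 1 = d (1 * 1) = d 1 + d 1. *)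
Lemma derivation1 (R : realType) (V : comAlgType R[i]) (d : {linear V -> V}) :
  is_derivation d -> d 1 = 0.
Proof.
move=> der; have := der 1 1; rewrite !mulr1 mul1r => d1_sum.
by apply: (addrI (d 1)); rewrite addr0 -d1_sum.
Qed.

Lemma binz0 n : binz n 0 = 1.
Proof. by case: n => p /=; rewrite ?bin0 ?expr0 ?mul1r. Qed.

Lemma iter_kill1 (R : nzRingType) (A : lalgType R) (d : {linear A -> A}) k :
  d 1 = 0 -> iter k d 1 = if k == 0%N then 1 else 0.
Proof. by case: k => // k d1_0; rewrite iterSr d1_0 iter_linear0. Qed.

Section DivisionByHa.
Variables (R : realType) (V : comAlgType R[i]) (d1 d2 : {linear V -> V}) (a : V).
Hypotheses (d1_1 : d1 1 = 0) (d2_1 : d2 1 = 0).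


Definition mul_summand (P Q : pdo V) (N : int) (M : nat)
    (i : int * nat * nat * nat) : V :=
  let: (n, k, m, j) := i in
  if (j <= m)%N && (m - j <= M)%N then
    P n m * ((binz n k * ('C(m, j))%:Z)%:~R)
      * iter k d1 (iter j d2 (Q (N - n + k%:Z) (M - (m - j))%N))
  else 0.

Lemma pdo_mulE P Q N M :
  pdo_mul d1 d2 P Q N M = \sum_(i \in [set: int * nat * nat * nat]) mul_summand P Q N M i.
Proof. by []. Qed.

(* Coefficient of d2^M d1^N in Q a, as a sum over (k, j): the term coming
   from d2^(M+j) d1^(N+k) a.  It reads row N + k >= N of Q only. *)
Definition mul_a_term (Q : pdo V) (N : int) (M : nat) (kj : nat * nat) : V :=
  Q (N + kj.1%:Z) (M + kj.2)%N
    * ((binz (N + kj.1%:Z) kj.1 * ('C(M + kj.2, kj.2))%:Z)%:~R)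
    * iter kj.1 d1 (iter kj.2 d2 a).

Definition mul_a_coef (Q : pdo V) (N : int) (M : nat) : V :=
  \sum_(kj \in [set: nat * nat]) mul_a_term Q N M kj.

Definition shift_index (N : int) (M : nat) : int * nat * nat * nat :=
  (N - 1, 0%N, (M - 1)%N, 0%N).

Definition a_index (N : int) (M : nat) (kj : nat * nat) : int * nat * nat * nat :=
  (N + kj.1%:Z, kj.1, (M + kj.2)%N, kj.2).

Lemma mul_summand_shift Q N M :
  mul_summand Q (Hop a) N M (shift_index N M) =
    if (0 < M)%N then Q (N - 1) (M - 1)%N else 0.
Proof.
rewrite /mul_summand /shift_index /= subn0 leq_subr /= binz0 bin0 mulr1.
have -> : N - (N - 1) + 0%:Z = 1 by lia.
by case: M => [|M] /=; rewrite /Hop /= ?mulr0 // subSS subn0 subSnn mulr1.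
Qed.

Lemma mul_summand_a Q N M kj :
  mul_summand Q (Hop a) N M (a_index N M kj) = mul_a_term Q N M kj.
Proof.
case: kj => k j; rewrite /mul_summand /a_index /mul_a_term /= leq_addl addnK leqnn.
have -> : N - (N + k%:Z) + k%:Z = 0 by lia.
by rewrite subnn /Hop.
Qed.

(* No other summand of Q H_a is nonzero, because d1^k d2^j (1) = 0 unless
   k = j = 0. *)
Lemma mul_summand_support Q N M i : mul_summand Q (Hop a) N M i != 0 ->
  i = shift_index N M \/ exists kj, i = a_index N M kj.
Proof.
case: i => [[[n k] m] j]; rewrite /mul_summand.
case: ifP => [/andP [le_jm le_mjM]|]; last by rewrite eqxx.
rewrite /Hop; case: ifP => [/andP [/eqP n1 /eqP m1] | _].
  rewrite iter_kill1 //; case: (j =P 0%N) => [j0|]; last first.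
    by rewrite iter_linear0 mulr0 eqxx.
  rewrite iter_kill1 //; case: (k =P 0%N) => [k0|]; last by rewrite mulr0 eqxx.
  by move=> _; left; subst k j; rewrite /shift_index; congr (_, _, _, _); lia.
case: ifP => [/andP [/eqP n0 /eqP m0] _ | _]; last first.
  by rewrite !iter_linear0 mulr0 eqxx.
by right; exists (k, j); rewrite /a_index /=; congr (_, _, _, _); lia.
Qed.

Lemma mul_a_term_finite_support Q N M : is_pdo Q ->
  exists2 S : set (nat * nat), finite_set S &
    forall kj, ~ S kj -> mul_a_term Q N M kj = 0.
Proof.
move=> [[B hiQ] rowsQ].
have [J rowsJ] := uniform_row_bound (p := fun k m => Q (N + k%:Z) m = 0)
  (K := `|B - N|%N.+1) (fun k _ => rowsQ (N + k%:Z)).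
exists (`I_(`|B - N|%N.+1) `*` `I_(J.+1 - M)%N).
  by apply: finite_setX; apply: finite_II.
case=> k j /= notS; rewrite /mul_a_term /=.
have [ltk|gek] := ltnP k `|B - N|.+1; last by rewrite hiQ ?mul0r //; lia.
rewrite rowsJ ?mul0r //.
have : ~ (j < J.+1 - M)%N by move=> ltj; apply: notS; split.
lia.
Qed.

Lemma coef_mul_Ha Q N M : is_pdo Q ->
  pdo_mul d1 d2 Q (Hop a) N M =
    (if (0 < M)%N then Q (N - 1) (M - 1)%N else 0) + mul_a_coef Q N M.
Proof.
move=> pQ; have [S finS S_supp] := mul_a_term_finite_support N M pQ.
have a_index_inj : injective (a_index N M).
  by move=> [k j] [k' j'] [] _ <- _ <-.
rewrite pdo_mulE -(fsbig_widen ([set shift_index N M] `|` a_index N M @` S) setT) //;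
  last first.
  move=> i [_ /= notin]; apply: contra_notP notin => /eqP nz.
  have [->|[kj ikj]] := mul_summand_support nz; first by left.
  right; exists kj; last by rewrite ikj.
  by apply: contrapT => notS; move: nz; rewrite ikj mul_summand_a S_supp ?eqxx.
rewrite fsbigU0 //; last 2 first.
- exact: finite_image.
- by move=> i [/= -> [[k j] _]]; rewrite /shift_index /a_index => -[] /eqP; lia.
rewrite fsbig_set1 mul_summand_shift fsbig_image; last by move=> x y _ _ /a_index_inj.
congr (_ + _); rewrite (eq_fsbigr (mul_a_term Q N M)); last first.
  by move=> kj _; exact: mul_summand_a.
by rewrite /mul_a_coef (fsbig_widen S setT) // => kj [_ /S_supp].
Qed.

Definition division_step (P Q : pdo V) (n : int) : nat -> V :=
  fun m => P (n + 1) m.+1 - mul_a_coef Q (n + 1) m.+1.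

Definition division_recursion (P Q : pdo V) : Prop :=
  forall n m, Q n m = division_step P Q n m.

(* P - Q H_a lies in V((d1^-1)) iff Q satisfies the division recursion:
   compare the coefficients of d2^(m+1) d1^(n+1). *)
Lemma in_Vd1_divisionP P Q : is_pdo Q ->
  in_Vd1 (pdo_sub P (pdo_mul d1 d2 Q (Hop a))) <-> division_recursion P Q.
Proof.
move=> pQ; split.
  move=> inV n m; have := inV (n + 1) m.+1 (ltn0Sn m).
  rewrite /pdo_sub coef_mul_Ha //= subn1 /= addrK => /eqP.
  by rewrite /division_step subr_eq0 => /eqP ->; rewrite addrK.
move=> recQ N [//|m] _; rewrite /pdo_sub coef_mul_Ha //= subn1 /= recQ.
by rewrite /division_step subrK subrK subrr.
Qed.

Lemma division_step_local P Q Q' n :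
  (forall n', n < n' -> Q n' = Q' n') -> division_step P Q n = division_step P Q' n.
Proof.
move=> eqQ; apply/funext => m; congr (_ - _).
by apply: eq_fsbigr => kj _; rewrite /mul_a_term eqQ //; lia.
Qed.

Lemma division_recursion_unique P Q Q' : is_pdo Q -> is_pdo Q' ->
  division_recursion P Q -> division_recursion P Q' -> Q = Q'.
Proof.
move=> [[B hiQ] _] [[B' hiQ'] _] recQ recQ'.
apply: (@downward_fixpoint_unique _ (fun=> 0) (division_step P)
  (@division_step_local P) _ _ (`|B|%:Z + `|B'|%:Z)).
- by move=> n ltn; apply/funext => m; apply: hiQ; lia.
- by move=> n ltn; apply/funext => m; apply: hiQ'; lia.
- by move=> n; apply/funext => m; apply: recQ.
- by move=> n; apply/funext => m; apply: recQ'.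
Qed.

(* A solution vanishing above B has rows polynomial in d2: by downward
   induction, row n is built from the finitely many rows n+1 .. B. *)
Lemma division_recursion_rows P Q (B : int) :
  (forall n, exists M : nat, forall m, (M < m)%N -> P n m = 0) ->
  (forall n m, B <= n -> Q n m = 0) -> division_recursion P Q ->
  forall n, exists M : nat, forall m, (M < m)%N -> Q n m = 0.
Proof.
move=> rowsP hiQ recQ.
have rowsQ t n : B - t%:Z < n -> exists M : nat, forall m, (M < m)%N -> Q n m = 0.
  elim: t n => [|t IH] n ltn; first by exists 0%N => m _; apply: hiQ; lia.
  have [leBn|ltnB] := lerP B n; first by exists 0%N => m _; apply: hiQ.
  have [J rowsJ] := uniform_row_bound (p := fun k m => Q (n + 1 + k%:Z) m = 0)
    (K := `|B - n|%N) (fun k _ => IH (n + 1 + k%:Z) ltac:(lia)).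
  have [MP rowP] := rowsP (n + 1).
  exists (maxn J MP) => m ltm; rewrite recQ /division_step rowP; last by lia.
  rewrite /mul_a_coef fsbig1 ?subrr // => -[k j] _; rewrite /mul_a_term /=.
  have [ltk|gek] := ltnP k `|B - n|%N; first by rewrite rowsJ ?mul0r //; lia.
  by rewrite hiQ ?mul0r //; lia.
by move=> n; apply: (rowsQ `|B - n|%N.+1); lia.
Qed.

(* Existence of the quotient: run the recursion downwards from the row above
   which P vanishes. *)
Lemma division_recursion_exists P : is_pdo P ->
  exists2 Q, is_pdo Q & division_recursion P Q.
Proof.
move=> [[B hiP] rowsP].
have [Q fixQ] := downward_fixpoint_exists (fun=> 0) (@division_step_local P) B.
have hiQ n m : B <= n -> Q n m = 0.
  by move=> leBn; rewrite fixQ ifF //; apply/negbTE; lia.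
have recQ : division_recursion P Q.
  move=> n m; have := fixQ n; case: ifP => [_ -> // | /negbT geBn ->].
  rewrite /division_step hiP; last by lia.
  by rewrite /mul_a_coef fsbig1 ?subrr // => kj _; rewrite /mul_a_term hiQ ?mul0r //; lia.
exists Q => //; split; last exact: division_recursion_rows rowsP hiQ recQ.
by exists B => n m ltBn; apply: hiQ; lia.
Qed.

Theorem unique_division_Ha : unique_division d1 d2 a.
Proof.
move=> P pP; have [Q pQ recQ] := division_recursion_exists pP.
exists Q; split => //; first exact/(in_Vd1_divisionP P pQ).
by move=> Q' pQ' /(in_Vd1_divisionP P pQ') recQ'; exact: division_recursion_unique.
Qed.

End DivisionByHa.

Theorem lemma1 (R : realType) (V : comAlgType R[i])
  (d1 d2 : {linear V -> V}) (a : V) :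
  (forall x y : V, x * y = 0 -> x = 0 \/ y = 0) ->
  is_derivation d1 -> is_derivation d2 ->
  (forall x : V, d1 (d2 x) = d2 (d1 x)) ->
  unique_division d1 d2 a /\ unique_division d2 d1 a.
Proof.
move=> _ der1 der2 _.
by split; apply: unique_division_Ha; apply: derivation1.
Qed.
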